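(* Let $z_1,z_2\in(0,1)$ and set $$\alpha_1=z_2\frac{1-z_1}{1+z_1},\qquad \alpha_2=\frac{1}{z_2}\frac{1-z_1}{1+z_1}.$$ Define, for $n\in\mathbb Z$, $$w_n=\int_{-\pi}^{\pi}\frac{d\theta}{2\pi}\,\frac{\left(1+\alpha_1\alpha_2-(\alpha_1+\alpha_2)\cos\theta\right)\cos(n\theta)-(\alpha_1-\alpha_2)\sin\theta\,\sin(n\theta)}{\sqrt{(1-2\alpha_1\cos\theta+\alpha_1^2)(1-2\alpha_2\cos\theta+\alpha_2^2)}},$$ the Fourier coefficients of the weight $w(\zeta)=\left[\frac{(1-\alpha_1\zeta)(1-\alpha_2\zeta^{-1})}{(1-\alpha_1\zeta^{-1})(1-\alpha_2\zeta)}\right]^{1/2}$ on $|\zeta|=1$ (these are the Toeplitz matrix elements whose $N\times N$ Toeplitz determinant gives the column correlation $\langle\sigma_{0,0}\sigma_{0,N}\rangle$ of the anisotropic square lattice Ising model). Then for every $n\in\mathbb Z$, \begin{multline*} 2\alpha_1\alpha_2(n-3)w_{n-3}-(1+\alpha_1\alpha_2)\left[(2n-5)\alpha_1+(2n-3)\alpha_2\right]w_{n-2}\\ +2\left[(n-2)\alpha_1^2+n\alpha_2^2+(n-1)(1+\alpha_1\alpha_2)^2\right]w_{n-1}\\ -(1+\alpha_1\alpha_2)\left[(2n-1)\alpha_1+(2n+1)\alpha_2\right]w_n+2\alpha_1\alpha_2(n+1)w_{n+1}=0 . \end{multline*}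
   Context: Here $z_i=\tanh K_i$ where $K_1,K_2$ are the horizontal and vertical couplings of the square lattice Ising model (ferromagnetic regime); the square root in the integrand is taken positive. *)

From Stdlib Require Import Reals ZArith.
From Coquelicot Require Import Coquelicot.
Open Scope R_scope.

Definition alpha1 (z1 z2 : R) : R := z2 * ((1 - z1) / (1 + z1)).
Definition alpha2 (z1 z2 : R) : R := (1 / z2) * ((1 - z1) / (1 + z1)).

Definition w_integrand (a1 a2 : R) (n : Z) (t : R) : R :=
  ((1 + a1 * a2 - (a1 + a2) * cos t) * cos (IZR n * t)
     - (a1 - a2) * sin t * sin (IZR n * t))
  / sqrt ((1 - 2 * a1 * cos t + a1 ^ 2) * (1 - 2 * a2 * cos t + a2 ^ 2)).

Definition w_coef (z1 z2 : R) (n : Z) : R :=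
  RInt (w_integrand (alpha1 z1 z2) (alpha2 z1 z2) n) (- PI) PI / (2 * PI).

From Stdlib Require Import Reals ZArith Lra Lia.
From Coquelicot Require Import Coquelicot.
Open Scope R_scope.

(* The five-term combination of the integrands of [w (n-3)], ..., [w (n+1)] is the
   derivative of
     G(t) = -2 |1 - a1 e^{it}| |1 - a2 e^{it}|
            ((1 + a1 a2 - (a1 + a2) cos t) sin ((1 - n) t) - (a1 - a2) sin t cos ((1 - n) t)),
   and G(PI) = G(-PI), so the combination integrates to 0 over [-PI, PI].  Since
   [a1 < 1], the only singular case is [a2 = 1], where the weight's denominator vanishes
   at [t = 0]: the integrands stay continuous there because [sin (k t)] is divisible by
   [sin t], and the fundamental theorem of calculus is applied on [-PI, 0] and [0, PI]
   separately, where G is differentiable in the interior. *)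

Lemma cos_lt_1 t : -PI <= t <= PI -> t <> 0 -> cos t < 1.
Proof.
intros ht ht0. rewrite <- cos_0.
destruct (Rlt_or_le 0 t) as [hp | hn].
- apply cos_decreasing_1; lra.
- rewrite <- cos_neg. apply cos_decreasing_1; lra.
Qed.

Lemma pow_SS_of_pythagoras (s c : R) (n : nat) :
  s * s + c * c = 1 -> s ^ S (S n) = s ^ n * (1 - c ^ 2).
Proof. intros h. replace (1 - c ^ 2) with (s * s) by (rewrite <- h; ring). simpl. ring. Qed.

Ltac ring_pythagoras h :=
  ring_simplify;
  repeat (rewrite (pow_SS_of_pythagoras _ _ _ h); ring_simplify);
  ring.

Lemma RInt_eq_of_is_derive_interior (f g : R -> R) a b :
  a < b -> (forall x, continuous g x) -> (forall x, a <= x <= b -> continuous f x) ->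
  (forall x, a < x < b -> is_derive f x (g x)) -> RInt g a b = f b - f a.
Proof.
intros hab hg hf hd.
set (F := fun y => RInt g a y).
assert (hF : forall x, locally x (fun y => is_RInt g a y (F y))).
{ intros x. apply filter_forall. intros y.
  apply (RInt_correct (V := R_CompleteNormedModule)),
    (ex_RInt_continuous (V := R_CompleteNormedModule)). auto. }
destruct (MVT_gen (fun y => F y - f y) a b (fun _ => 0)) as [c [_ hc]].
- rewrite Rmin_left, Rmax_right by lra. intros x hx.
  replace 0 with (g x - g x) by ring.
  apply (is_derive_minus F f); [apply is_derive_RInt with a; auto | auto].
- rewrite Rmin_left, Rmax_right by lra. intros x hx. apply continuity_pt_filterlim.
  apply (continuous_minus F f); [apply continuous_RInt_1 with g a; auto | auto].
- assert (F a = 0) by (unfold F; rewrite RInt_point; reflexivity).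
  change (RInt g a b) with (F b). lra.
Qed.

(* [circ_quad a t = |1 - a e^{it}|^2]. *)
Definition circ_quad (a t : R) : R := 1 - 2 * a * cos t + a ^ 2.

Lemma circ_quad_eq a t : circ_quad a t = (1 - a) ^ 2 + 2 * a * (1 - cos t).
Proof. unfold circ_quad. ring. Qed.

Lemma circ_quad_gt0 a t : 0 <= a -> a <> 1 -> 0 < circ_quad a t.
Proof.
intros ha ha1. rewrite circ_quad_eq.
assert (0 < (1 - a) ^ 2) by (apply pow2_gt_0; lra).
pose proof (COS_bound t). nra.
Qed.

Lemma circ_quad_gt0_cos a t : 0 <= a -> cos t < 1 -> 0 < circ_quad a t.
Proof.
intros ha hc. rewrite circ_quad_eq.
destruct (Req_dec a 0) as [-> | ha0].
- lra.
- assert (0 < 2 * a * (1 - cos t)) by (apply Rmult_lt_0_compat; lra).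
  pose proof (pow2_ge_0 (1 - a)). lra.
Qed.

Lemma is_derive_circ_quad a t : is_derive (circ_quad a) t (2 * a * sin t).
Proof. unfold circ_quad. auto_derive; auto. ring. Qed.

Lemma sin_INR_mul_factor (k : nat) :
  exists u : R -> R, (forall t, ex_derive u t) /\ forall t, sin (INR k * t) = sin t * u t.
Proof.
induction k as [|k [u [hu he]]].
- exists (fun _ => 0). split.
  + intros t. auto_derive. auto.
  + intros t. rewrite Rmult_0_l, sin_0. ring.
- exists (fun t => u t * cos t + cos (INR k * t)). split.
  + intros t. auto_derive. auto.
  + intros t. rewrite S_INR, Rmult_plus_distr_r, Rmult_1_l, sin_plus, he. ring.
Qed.

Lemma sin_IZR_mul_factor (k : Z) :
  exists u : R -> R, (forall t, ex_derive u t) /\ forall t, sin (IZR k * t) = sin t * u t.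
Proof.
destruct (Z_le_gt_dec 0 k) as [hk | hk].
- destruct (sin_INR_mul_factor (Z.to_nat k)) as [u [hu he]].
  exists u. split; auto. intros t. rewrite <- he, INR_IZR_INZ, Z2Nat.id by lia. reflexivity.
- destruct (sin_INR_mul_factor (Z.to_nat (- k))) as [u [hu he]].
  exists (fun t => - u t). split.
  + intros t. auto_derive. auto.
  + intros t. replace (IZR k) with (- INR (Z.to_nat (- k)))
      by (rewrite INR_IZR_INZ, Z2Nat.id, opp_IZR by lia; ring).
    rewrite Ropp_mult_distr_l_reverse, sin_neg, he. ring.
Qed.

Lemma w_integrand_continuous_pos a1 a2 k t :
  0 < circ_quad a1 t * circ_quad a2 t -> continuous (w_integrand a1 a2 k) t.
Proof.
intros hD. apply (ex_derive_continuous (K := R_AbsRing) (V := R_NormedModule)).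
unfold w_integrand. auto_derive.
replace ((1 + - (2 * a1 * cos t) + a1 * (a1 * 1)) * (1 + - (2 * a2 * cos t) + a2 * (a2 * 1)))
  with (circ_quad a1 t * circ_quad a2 t) by (unfold circ_quad; ring).
repeat split; auto. apply Rgt_not_eq, sqrt_lt_R0, hD.
Qed.

Lemma w_integrand_unit_eq a1 k u t :
  0 < circ_quad a1 t -> sin (IZR k * t) = sin t * u ->
  w_integrand a1 1 k t =
  sqrt (1 - cos t) * (((1 + a1) * cos (IZR k * t) - (a1 - 1) * (1 + cos t) * u)
                      / (sqrt 2 * sqrt (circ_quad a1 t))).
Proof.
intros hq hu. unfold w_integrand. rewrite hu.
pose proof (COS_bound t) as hc. pose proof (sin2_cos2 t) as hs. unfold Rsqr in hs.
change (1 - 2 * a1 * cos t + a1 ^ 2) with (circ_quad a1 t).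
replace (circ_quad a1 t * (1 - 2 * 1 * cos t + 1 ^ 2)) with (2 * circ_quad a1 t * (1 - cos t))
  by ring.
rewrite !sqrt_mult by lra.
destruct (Req_dec (cos t) 1) as [hc1 | hc1].
- assert (hs0 : sin t = 0) by (apply Rsqr_0_uniq; unfold Rsqr; rewrite hc1 in hs; lra).
  rewrite hc1, hs0, Rminus_diag, sqrt_0. unfold Rdiv. ring.
- assert (hc0 : 0 < 1 - cos t) by lra.
  pose proof (sqrt_lt_R0 _ hc0). pose proof (sqrt_lt_R0 _ hq).
  assert (0 < sqrt 2) by (apply sqrt_lt_R0; lra).
  replace ((a1 - 1) * sin t * (sin t * u)) with ((a1 - 1) * (sin t * sin t) * u) by ring.
  replace (sin t * sin t) with (1 - cos t * cos t) by lra.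
  field_simplify_eq; [| repeat split; lra].
  rewrite pow2_sqrt by lra. ring.
Qed.

Lemma w_integrand_unit_continuous a1 k t :
  0 <= a1 -> a1 <> 1 -> continuous (w_integrand a1 1 k) t.
Proof.
intros ha ha1. destruct (sin_IZR_mul_factor k) as [u [hu he]].
pose proof (fun x => circ_quad_gt0 a1 x ha ha1) as hq.
apply continuous_ext with (fun x => sqrt (1 - cos x) *
  (((1 + a1) * cos (IZR k * x) - (a1 - 1) * (1 + cos x) * u x)
   / (sqrt 2 * sqrt (circ_quad a1 x)))).
{ intros x. symmetry. apply w_integrand_unit_eq; auto. }
apply (continuous_mult (fun x => sqrt (1 - cos x))).
- apply continuous_sqrt_comp, (ex_derive_continuous (K := R_AbsRing) (V := R_NormedModule)).
  auto_derive. auto.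
- apply (ex_derive_continuous (K := R_AbsRing) (V := R_NormedModule)).
  pose proof (hq t) as hqt. unfold circ_quad in *. auto_derive.
  replace (1 + - (2 * a1 * cos t) + a1 * (a1 * 1)) with (1 - 2 * a1 * cos t + a1 ^ 2) by ring.
  repeat split; auto.
  apply Rmult_integral_contrapositive; split; apply Rgt_not_eq, sqrt_lt_R0; lra.
Qed.

Lemma w_integrand_continuous a1 a2 k t :
  0 <= a1 -> a1 <> 1 -> 0 <= a2 -> continuous (w_integrand a1 a2 k) t.
Proof.
intros ha1 ha11 ha2. destruct (Req_dec a2 1) as [-> | ha21].
- apply w_integrand_unit_continuous; auto.
- apply w_integrand_continuous_pos, Rmult_lt_0_compat; apply circ_quad_gt0; auto.
Qed.

Definition recurrence_integrand (a1 a2 : R) (n : Z) (t : R) : R :=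
  let m := IZR n in
  2 * a1 * a2 * (m - 3) * w_integrand a1 a2 (n - 3) t
  - (1 + a1 * a2) * ((2 * m - 5) * a1 + (2 * m - 3) * a2) * w_integrand a1 a2 (n - 2) t
  + 2 * ((m - 2) * a1 ^ 2 + m * a2 ^ 2 + (m - 1) * (1 + a1 * a2) ^ 2) * w_integrand a1 a2 (n - 1) t
  - (1 + a1 * a2) * ((2 * m - 1) * a1 + (2 * m + 1) * a2) * w_integrand a1 a2 n t
  + 2 * a1 * a2 * (m + 1) * w_integrand a1 a2 (n + 1) t.

Definition recurrence_primitive (a1 a2 m t : R) : R :=
  -2 * sqrt (circ_quad a1 t * circ_quad a2 t)
  * ((1 + a1 * a2 - (a1 + a2) * cos t) * sin ((1 - m) * t)
     - (a1 - a2) * sin t * cos ((1 - m) * t)).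

Lemma is_derive_recurrence_primitive a1 a2 n t :
  0 < circ_quad a1 t * circ_quad a2 t ->
  is_derive (recurrence_primitive a1 a2 (IZR n)) t (recurrence_integrand a1 a2 n t).
Proof.
unfold recurrence_primitive, recurrence_integrand, w_integrand; intros hD.
rewrite !minus_IZR, plus_IZR. set (m := IZR n).
fold (circ_quad a1 t) (circ_quad a2 t).
pose proof (is_derive_circ_quad a1 t) as hd1. pose proof (is_derive_circ_quad a2 t) as hd2.
auto_derive.
{ repeat split; auto; eexists; eauto. }
replace (Derive (fun x => circ_quad a1 x) t) with (2 * a1 * sin t)
  by (symmetry; apply is_derive_unique, hd1).
replace (Derive (fun x => circ_quad a2 x) t) with (2 * a2 * sin t)
  by (symmetry; apply is_derive_unique, hd2).
pose proof (sqrt_sqrt _ (Rlt_le _ _ hD)) as hr.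
pose proof (sqrt_lt_R0 _ hD) as hr0.
set (r := sqrt _) in hr, hr0 |- *. clearbody r.
replace ((1 - m) * t) with (t - m * t) by ring.
replace ((m - 3) * t) with (m * t - t - t - t) by ring.
replace ((m - 2) * t) with (m * t - t - t) by ring.
replace ((m - 1) * t) with (m * t - t) by ring.
replace ((m + 1) * t) with (m * t + t) by ring.
repeat (rewrite cos_minus || rewrite sin_minus). rewrite cos_plus, sin_plus.
pose proof (sin2_cos2 t) as hs. unfold Rsqr in hs.
unfold circ_quad in hr |- *. clear hd1 hd2 hD.
set (c := cos t) in hs, hr |- *. set (s := sin t) in hs |- *.
set (C := cos (m * t)). set (S := sin (m * t)).
clearbody c s C S.
field_simplify_eq; [| lra].
replace (r ^ 2) with ((1 - 2 * a1 * c + a1 ^ 2) * (1 - 2 * a2 * c + a2 ^ 2))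
  by (rewrite <- hr; ring).
ring_pythagoras hs.
Qed.

Lemma recurrence_primitive_continuous a1 a2 m t : continuous (recurrence_primitive a1 a2 m) t.
Proof.
unfold recurrence_primitive.
apply (continuous_mult (fun x => -2 * sqrt (circ_quad a1 x * circ_quad a2 x))).
- apply (continuous_mult (fun _ => -2)); [apply continuous_const |].
  apply continuous_sqrt_comp, (ex_derive_continuous (K := R_AbsRing) (V := R_NormedModule)).
  unfold circ_quad. auto_derive. auto.
- apply (ex_derive_continuous (K := R_AbsRing) (V := R_NormedModule)). auto_derive. auto.
Qed.

Lemma recurrence_primitive_periodic a1 a2 n :
  recurrence_primitive a1 a2 (IZR n) PI = recurrence_primitive a1 a2 (IZR n) (- PI).
Proof.
unfold recurrence_primitive, circ_quad.
replace ((1 - IZR n) * - PI) with (- ((1 - IZR n) * PI)) by ring.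
rewrite cos_neg, !sin_neg, cos_neg, sin_PI.
rewrite (sin_eq_0_1 ((1 - IZR n) * PI)) by (exists (1 - n)%Z; rewrite minus_IZR; reflexivity).
ring.
Qed.

Lemma recurrence_integrand_continuous a1 a2 n t :
  0 <= a1 -> a1 <> 1 -> 0 <= a2 -> continuous (recurrence_integrand a1 a2 n) t.
Proof.
intros ha1 ha11 ha2.
assert (hw : forall c k, continuous (fun x => c * w_integrand a1 a2 k x) t).
{ intros c k. apply (continuous_mult (fun _ => c)); [apply continuous_const |].
  apply w_integrand_continuous; auto. }
unfold recurrence_integrand.
apply (continuous_plus (V := R_NormedModule)); [| apply hw].
apply (continuous_minus (V := R_NormedModule)); [| apply hw].
apply (continuous_plus (V := R_NormedModule)); [| apply hw].
apply (continuous_minus (V := R_NormedModule)); apply hw.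
Qed.

Lemma RInt_recurrence_integrand a1 a2 n :
  0 <= a1 < 1 -> 0 <= a2 -> RInt (recurrence_integrand a1 a2 n) (- PI) PI = 0.
Proof.
intros ha1 ha2. pose proof PI_RGT_0.
assert (hc : forall x, continuous (recurrence_integrand a1 a2 n) x)
  by (intros; apply recurrence_integrand_continuous; lra).
assert (hd : forall x, - PI <= x <= PI -> x <> 0 ->
           is_derive (recurrence_primitive a1 a2 (IZR n)) x (recurrence_integrand a1 a2 n x)).
{ intros x hx hx0. pose proof (cos_lt_1 x hx hx0).
  apply is_derive_recurrence_primitive, Rmult_lt_0_compat; apply circ_quad_gt0_cos; lra. }
assert (hex : forall a b, ex_RInt (recurrence_integrand a1 a2 n) a b)
  by (intros; apply (ex_RInt_continuous (V := R_CompleteNormedModule)); auto).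
set (G := recurrence_primitive a1 a2 (IZR n)) in *.
assert (hleft : RInt (recurrence_integrand a1 a2 n) (- PI) 0 = G 0 - G (- PI)).
{ apply RInt_eq_of_is_derive_interior;
    [lra | exact hc | intros; apply recurrence_primitive_continuous | intros x hx; apply hd; lra]. }
assert (hright : RInt (recurrence_integrand a1 a2 n) 0 PI = G PI - G 0).
{ apply RInt_eq_of_is_derive_interior;
    [lra | exact hc | intros; apply recurrence_primitive_continuous | intros x hx; apply hd; lra]. }
rewrite <- (RInt_Chasles _ (- PI) 0 PI) by auto.
rewrite hleft, hright. unfold G. rewrite recurrence_primitive_periodic.
change (plus ?x ?y) with (x + y). lra.
Qed.

Lemma RInt_recurrence_integrand_eq a1 a2 n a b :
  (forall k, ex_RInt (w_integrand a1 a2 k) a b) ->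
  let m := IZR n in
  let I k := RInt (w_integrand a1 a2 k) a b in
  RInt (recurrence_integrand a1 a2 n) a b =
  2 * a1 * a2 * (m - 3) * I (n - 3)%Z
  - (1 + a1 * a2) * ((2 * m - 5) * a1 + (2 * m - 3) * a2) * I (n - 2)%Z
  + 2 * ((m - 2) * a1 ^ 2 + m * a2 ^ 2 + (m - 1) * (1 + a1 * a2) ^ 2) * I (n - 1)%Z
  - (1 + a1 * a2) * ((2 * m - 1) * a1 + (2 * m + 1) * a2) * I n
  + 2 * a1 * a2 * (m + 1) * I (n + 1)%Z.
Proof.
intros hex m I.
assert (hw : forall c k, is_RInt (fun t => c * w_integrand a1 a2 k t) a b (c * I k)).
{ intros c k. apply (is_RInt_scal (V := R_NormedModule)).
  apply (RInt_correct (V := R_CompleteNormedModule)), hex. }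
apply is_RInt_unique. unfold recurrence_integrand.
apply (is_RInt_plus (V := R_NormedModule)); [| apply hw].
apply (is_RInt_minus (V := R_NormedModule)); [| apply hw].
apply (is_RInt_plus (V := R_NormedModule)); [| apply hw].
apply (is_RInt_minus (V := R_NormedModule)); apply hw.
Qed.

Lemma alpha1_bounds z1 z2 : 0 < z1 < 1 -> 0 < z2 < 1 -> 0 <= alpha1 z1 z2 < 1.
Proof.
intros hz1 hz2. unfold alpha1.
assert (hu : 0 < (1 - z1) / (1 + z1) < 1).
{ split; [apply Rdiv_lt_0_compat; lra |].
  apply (Rmult_lt_reg_r (1 + z1)); [lra |].
  unfold Rdiv. rewrite Rmult_assoc, Rinv_l by lra. lra. }
set (u := (1 - z1) / (1 + z1)) in *.
split.
- apply Rmult_le_pos; lra.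
- assert (z2 * u < 1 * u) by (apply Rmult_lt_compat_r; lra). lra.
Qed.

Lemma alpha2_ge0 z1 z2 : 0 < z1 < 1 -> 0 < z2 < 1 -> 0 <= alpha2 z1 z2.
Proof.
intros hz1 hz2. unfold alpha2. apply Rmult_le_pos.
- unfold Rdiv. rewrite Rmult_1_l. apply Rlt_le, Rinv_0_lt_compat. lra.
- apply Rlt_le, Rdiv_lt_0_compat; lra.
Qed.

Theorem corollary5 (z1 z2 : R) (n : Z) :
  0 < z1 < 1 -> 0 < z2 < 1 ->
  let a1 := alpha1 z1 z2 in
  let a2 := alpha2 z1 z2 in
  let w := w_coef z1 z2 in
  let m := IZR n in
  2 * a1 * a2 * (m - 3) * w (n - 3)%Z
  - (1 + a1 * a2) * ((2 * m - 5) * a1 + (2 * m - 3) * a2) * w (n - 2)%Z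
  + 2 * ((m - 2) * a1 ^ 2 + m * a2 ^ 2 + (m - 1) * (1 + a1 * a2) ^ 2) * w (n - 1)%Z
  - (1 + a1 * a2) * ((2 * m - 1) * a1 + (2 * m + 1) * a2) * w n
  + 2 * a1 * a2 * (m + 1) * w (n + 1)%Z = 0.
Proof.
intros hz1 hz2. cbv zeta. unfold w_coef.
pose proof (alpha1_bounds z1 z2 hz1 hz2) as ha1.
pose proof (alpha2_ge0 z1 z2 hz1 hz2) as ha2.
set (a1 := alpha1 z1 z2) in *. set (a2 := alpha2 z1 z2) in *.
assert (hex : forall k, ex_RInt (w_integrand a1 a2 k) (- PI) PI).
{ intros k. apply (ex_RInt_continuous (V := R_CompleteNormedModule)).
  intros. apply w_integrand_continuous; lra. }
pose proof (RInt_recurrence_integrand_eq a1 a2 n (- PI) PI hex) as hlin.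
cbv zeta in hlin. rewrite RInt_recurrence_integrand in hlin by lra.
rewrite <- (Rdiv_0_l (2 * PI)), hlin. field. apply PI_neq0.
Qed.
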